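(* Let $n\ge 1$ be an integer, let $g_i:[0,n]\to\mathbb{R}_{\ge 0}$ be a non-decreasing function and let $c_i\in\mathbb{R}$. For $z\in\{0,1,\ldots,n-1\}$ say that investing is a best response to $z$ if $g_i(1+z)-c_i\ge g_i(z)$. Then there exists a unique set $D_i\subseteq\{0,1,\ldots,n-1\}$ such that, for every $z\in\{0,\ldots,n-1\}$, investing is a best response to $z$ if and only if $z\in D_i$. Furthermore: (1) if $g_i$ is concave, $D_i$ is a downward-closed interval; (2) if $g_i$ is convex, $D_i$ is an upward-closed interval; (3) if $g_i$ is sigmoid, $D_i$ is an interval. Conversely, for every set $D_i\subseteq\{0,1,\ldots,n-1\}$ there exist a non-decreasing function $g_i:[0,n]\to\mathbb{R}_{\ge 0}$ and a cost $c_i$ such that, for every $z\in\{0,\ldots,n-1\}$, investing is a best response to $z$ if and only if $z\in D_i$. Furthermore: (1) if $D_i$ is a downward-closed interval, such a $g_i$ can be chosen concave; (2) if $D_i$ is an upward-closed interval, such a $g_i$ can be chosen convex; (3) if $D_i$ is an interval, such a $g_i$ can be chosen sigmoid.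
   Context: This models a player $i$ in a binary networked public goods game: if $i$ chooses $x_i\in\{0,1\}$ and $z$ of her network neighbors invest, her utility is $U_i(x_i,z)=g_i(x_i+z)-c_ix_i$; ties are broken in favor of investing, so investing is a best response to $z$ iff $U_i(1,z)\ge U_i(0,z)$. An interval means a set of consecutive integers in $\{0,\ldots,n-1\}$ (possibly empty); downward-closed means $z\in D_i$ and $0\le z'<z$ imply $z'\in D_i$; upward-closed means $z\in D_i$ and $z<z'\le n-1$ imply $z'\in D_i$. A function $g_i$ is called (generalized) sigmoid if there is some $\hat z\in[-\infty,\infty]$ such that $g_i$ is convex on $\{z:z\le\hat z\}$ and concave on $\{z:z\ge\hat z\}$ (so concave and convex functions are special cases). *)

From HB Require Import structures.
From mathcomp Require Import all_boot all_order all_algebra.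
From mathcomp Require Import reals constructive_ereal.
Set Implicit Arguments. Unset Strict Implicit. Unset Printing Implicit Defensive.
Import Order.TTheory GRing.Theory Num.Theory.
Local Open Scope ring_scope.

Section Defs.
Variable R : realType.

Definition in0n (n : nat) (x : R) : Prop := 0 <= x /\ x <= n%:R.

Definition nondecr_on (n : nat) (g : R -> R) : Prop :=
  forall x y, 0 <= x -> x <= y -> y <= n%:R -> g x <= g y.

Definition nonneg_on (n : nat) (g : R -> R) : Prop :=
  forall x, in0n n x -> 0 <= g x.

Definition convex_on (S : R -> Prop) (g : R -> R) : Prop :=
  forall x y t, S x -> S y -> 0 <= t -> t <= 1 ->
    g (t * x + (1 - t) * y) <= t * g x + (1 - t) * g y.

Definition concave_on (S : R -> Prop) (g : R -> R) : Prop :=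
  forall x y t, S x -> S y -> 0 <= t -> t <= 1 ->
    t * g x + (1 - t) * g y <= g (t * x + (1 - t) * y).

Definition convex_fun (n : nat) (g : R -> R) := convex_on (in0n n) g.
Definition concave_fun (n : nat) (g : R -> R) := concave_on (in0n n) g.

(* generalized sigmoid: some zhat in [-oo, +oo] such that g is convex on
   {z <= zhat} and concave on {z >= zhat} (within the domain [0,n]) *)
Definition sigmoid_fun (n : nat) (g : R -> R) : Prop :=
  exists zh : \bar R,
    convex_on (fun z => in0n n z /\ (z%:E <= zh)%E) g /\
    concave_on (fun z => in0n n z /\ (zh <= z%:E)%E) g.

Definition best_response (g : R -> R) (c : R) (z : nat) : Prop :=
  g (1 + z%:R) - c >= g z%:R.

Definition BR_set (n : nat) (g : R -> R) (c : R) (D : {set 'I_n}) : Prop :=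
  forall z : 'I_n, best_response g c z <-> z \in D.

End Defs.

Definition is_interval (n : nat) (D : {set 'I_n}) : Prop :=
  forall a b c : 'I_n, (a <= b)%N -> (b <= c)%N -> a \in D -> c \in D -> b \in D.

Definition down_closed (n : nat) (D : {set 'I_n}) : Prop :=
  forall a b : 'I_n, (a < b)%N -> b \in D -> a \in D.

Definition up_closed (n : nat) (D : {set 'I_n}) : Prop :=
  forall a b : 'I_n, (a < b)%N -> a \in D -> b \in D.

Arguments BR_set {R} n g c D.

From HB Require Import structures.
From mathcomp Require Import all_boot all_order all_algebra.
From mathcomp Require Import reals constructive_ereal.
From mathcomp Require Import ring lra zify.

(* Everything is governed by the marginal gain [gain g z = g (z+1) - g z]:
   investing is a best response to z iff c <= gain g z.  By the chord
   inequality, concavity (convexity) makes the gains non-increasing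
   (non-decreasing), so the best-response set is downward (upward) closed.
   For a sigmoid g the gains are quasi-concave: they increase left of the
   inflection point r and decrease right of it, and if r lies inside
   (k+1, k+2) then splitting [k+1, k+2] at r and using the chord inequality
   on either side bounds gain (k+1) below by a convex combination of
   gain k and gain (k+2).  Conversely, a range [m, p) is realised with cost 1
   by the clipped ramp min (max (x - m) 0) (p - m), which is convex left of p
   and concave right of m, and an arbitrary set D by a sum of unit steps. *)

Set Implicit Arguments.
Unset Strict Implicit.
Unset Printing Implicit Defensive.
Import Order.TTheory GRing.Theory Num.Theory.
Local Open Scope ring_scope.

Section Gain.
Variable R : realType.
Implicit Types (g : R -> R) (S : R -> Prop).

Definition gain g (k : nat) : R := g k.+1%:R - g k%:R.

Lemma best_responseE g c (z : nat) : best_response g c z <-> c <= gain g z.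
Proof. by rewrite /best_response /gain -nat1r; split=> ?; lra. Qed.

Lemma convex_on_chord S g x y z : convex_on S g -> S x -> S z -> x < y < z ->
  (g y - g x) * (z - y) <= (g z - g y) * (y - x).
Proof.
move=> gS Sx Sz /andP[xy yz].
have zx : 0 < z - x by lra.
pose t := (z - y) / (z - x).
have t01 : 0 <= t <= 1 by rewrite divr_ge0 ?ler_pdivrMr ?mul1r /=; lra.
have tzx : t * (z - x) = z - y by rewrite divfK ?gt_eqF.
have ty : t * x + (1 - t) * z = y by lra.
clearbody t; case/andP: t01 => t0 t1.
have := gS x z t Sx Sz t0 t1; rewrite ty => gy.
have := ler_wpM2r (ltW zx) gy.
have -> : (t * g x + (1 - t) * g z) * (z - x) = (z - y) * g x + (y - x) * g z.
  by rewrite -ty; ring.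
lra.
Qed.

Lemma concave_on_opp S g : concave_on S g -> convex_on S (fun x => - g x).
Proof. by move=> gS x y t Sx Sy t0 t1; have := gS x y t Sx Sy t0 t1; lra. Qed.

Lemma gain_opp g k : gain (fun x => - g x) k = - gain g k.
Proof. by rewrite /gain; ring. Qed.

Lemma gain_leS_convex S g k : convex_on S g -> S k%:R -> S k.+2%:R ->
  gain g k <= gain g k.+1.
Proof.
move=> gS Sk Sk2; have := convex_on_chord (y := k.+1%:R) gS Sk Sk2.
have unit_step (x : R) : x + 1 - x = 1 by rewrite addrAC subrr add0r.
by rewrite /gain -!natr1 !ltrDl ltr01 !unit_step !mulr1; apply.
Qed.

Lemma gain_nondecr_convex S g (a b : nat) : convex_on S g ->
  (forall k, (a <= k <= b.+1)%N -> S k%:R) -> (a <= b)%N -> gain g a <= gain g b.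
Proof.
move=> gS Sab ab; pose D := [pred k | a <= k <= b]%N.
have Dconvex : {in D &, forall i j k, i < k < j -> k \in D}%N.
  by move=> i j; rewrite !inE => ? ? k; rewrite inE; lia.
apply: (Order.NatMonotonyTheory.nondecn_inP Dconvex); rewrite ?inE ?leqnn ?ab //.
by move=> k; rewrite !inE => ? ?; apply: gain_leS_convex gS (Sab _ _) (Sab _ _); lia.
Qed.

Lemma gain_nonincr_concave S g (a b : nat) : concave_on S g ->
  (forall k, (a <= k <= b.+1)%N -> S k%:R) -> (a <= b)%N -> gain g b <= gain g a.
Proof.
move=> /concave_on_opp gS Sab ab.
by rewrite -lerN2 -!gain_opp; apply: gain_nondecr_convex gS Sab ab.
Qed.

Lemma gain_ge_min_inflection S T g (k : nat) r :
  convex_on S g -> concave_on T g -> S k%:R -> S r -> T r -> T k.+3%:R ->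
  k.+1%:R < r < k.+2%:R -> Num.min (gain g k) (gain g k.+2) <= gain g k.+1.
Proof.
move=> gS gT Sk Sr Tr Tk3 /andP[k1r rk2].
have := convex_on_chord (y := k.+1%:R) gS Sk Sr.
have := convex_on_chord (y := k.+2%:R) (concave_on_opp gT) Tr Tk3.
have mk : Num.min (gain g k) (gain g k.+2) <= gain g k by rewrite ge_min lexx.
have mk2 : Num.min (gain g k) (gain g k.+2) <= gain g k.+2 by rewrite ge_min lexx orbT.
move: mk mk2 k1r rk2; rewrite /gain -!natr1; set x := k%:R; set m := Num.min _ _.
move=> mk mk2 k1r rk2.
rewrite k1r rk2 !ltrDl ltr01 /= => /(_ isT) c2 /(_ isT) c1.
nra.
Qed.

Lemma in0n_nat n k : (k <= n)%N -> in0n n (k%:R : R).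
Proof. by move=> kn; split; rewrite ?ler0n ?ler_nat. Qed.

Lemma gain_nondecr_below n g zh (a b : nat) :
  convex_on (fun z => in0n n z /\ (z%:E <= zh)%E) g -> (b.+1%:R%:E <= zh)%E ->
  (a <= b)%N -> (b < n)%N -> gain g a <= gain g b.
Proof.
move=> gcv bz ab bn; apply: gain_nondecr_convex gcv _ ab => k /andP[_ kb].
by split; [apply: in0n_nat; lia | apply: le_trans bz; rewrite lee_fin ler_nat].
Qed.

Lemma gain_nonincr_above n g zh (a b : nat) :
  concave_on (fun z => in0n n z /\ (zh <= z%:E)%E) g -> (zh <= a%:R%:E)%E ->
  (a <= b)%N -> (b < n)%N -> gain g b <= gain g a.
Proof.
move=> gcc za ab bn; apply: gain_nonincr_concave gcc _ ab => k /andP[ak kb].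
by split; [apply: in0n_nat; lia | apply: le_trans za _; rewrite lee_fin ler_nat].
Qed.

Lemma gain_sigmoid_ge_min n g (a b c : nat) : sigmoid_fun n g ->
  (a <= b <= c)%N -> (c < n)%N -> Num.min (gain g a) (gain g c) <= gain g b.
Proof.
move=> [zh [gcv gcc]] /andP[ab bc] cn.
have [<-|ab'] := eqVneq a b; first by rewrite ge_min lexx.
have [->|bc'] := eqVneq b c; first by rewrite ge_min lexx orbT.
have [zb1|] := boolP (b.+1%:R%:E <= zh)%E.
  by rewrite ge_min (gain_nondecr_below gcv zb1 ab) //; lia.
have [zb|] := boolP (zh <= b%:R%:E)%E.
  by rewrite ge_min (gain_nonincr_above gcc zb bc cn) orbT.
case: zh gcv gcc => [r | |] gcv gcc; rewrite ?leey ?leNye // !lee_fin -!ltNge.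
case: b ab bc ab' bc' => [|b] ab bc ab' bc' br rb1; first by case: a ab ab'.
have r0n : in0n n r.
  by split; [apply: le_trans _ (ltW br) | apply: le_trans (ltW rb1) _; rewrite ler_nat; lia].
have mb : Num.min (gain g a) (gain g c) <= gain g b.
  by rewrite ge_min (gain_nondecr_below gcv) ?lee_fin ?(ltW br) //; lia.
have mb2 : Num.min (gain g a) (gain g c) <= gain g b.+2.
  by rewrite ge_min (gain_nonincr_above (b := c) gcc) ?lee_fin ?(ltW rb1) ?orbT //; lia.
apply: le_trans (gain_ge_min_inflection (r := r) gcv gcc _ _ _ _ _).
- by rewrite le_min mb mb2.
- by split; [apply: in0n_nat; lia | rewrite lee_fin; apply: le_trans _ (ltW br); rewrite ler_nat].
- by split; [exact: r0n | rewrite lee_fin].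
- by split; [exact: r0n | rewrite lee_fin].
- by split; [apply: in0n_nat; lia | rewrite lee_fin; apply: le_trans (ltW rb1) _; rewrite ler_nat].
- by rewrite br rb1.
Qed.

Lemma BR_setE n g c (D : {set 'I_n}) :
  BR_set n g c D -> forall z : 'I_n, (z \in D) = (c <= gain g z).
Proof.
move=> HD z; apply/idP/idP => h; first by apply/(best_responseE g c z)/(HD z).
by apply/(HD z)/(best_responseE g c z).
Qed.

Lemma BR_set_unique n g c (D1 D2 : {set 'I_n}) :
  BR_set n g c D1 -> BR_set n g c D2 -> D1 = D2.
Proof. by move=> /BR_setE HD1 /BR_setE HD2; apply/setP => z; rewrite HD1 HD2. Qed.

Lemma BR_set_gain n g c : BR_set n g c [set z : 'I_n | c <= gain g z].
Proof. by move=> z; rewrite inE best_responseE. Qed.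

Lemma BR_set_concave_down_closed n g c (D : {set 'I_n}) :
  BR_set n g c D -> concave_fun n g -> down_closed D.
Proof.
move=> /BR_setE HD gc a b ab; rewrite !HD => /le_trans; apply.
by apply: gain_nonincr_concave gc _ (ltnW ab) => k kb; apply: in0n_nat; have := ltn_ord b; lia.
Qed.

Lemma BR_set_convex_up_closed n g c (D : {set 'I_n}) :
  BR_set n g c D -> convex_fun n g -> up_closed D.
Proof.
move=> /BR_setE HD gc a b ab; rewrite !HD => /le_trans; apply.
by apply: gain_nondecr_convex gc _ (ltnW ab) => k kb; apply: in0n_nat; have := ltn_ord b; lia.
Qed.

Lemma BR_set_sigmoid_interval n g c (D : {set 'I_n}) :
  BR_set n g c D -> sigmoid_fun n g -> is_interval D.
Proof.
move=> /BR_setE HD gs a b d ab bd; rewrite !HD => ca cd.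
apply: le_trans (gain_sigmoid_ge_min (a := a) (c := d) gs _ (ltn_ord d)).
  by rewrite le_min ca cd.
by rewrite ab bd.
Qed.

End Gain.

Lemma down_closed_interval n (D : {set 'I_n}) : down_closed D -> is_interval D.
Proof.
move=> HD a b c _; rewrite leq_eqVlt => /orP[/eqP/val_inj -> //| bc] _.
exact: HD.
Qed.

Lemma up_closed_interval n (D : {set 'I_n}) : up_closed D -> is_interval D.
Proof.
move=> HD a b c; rewrite leq_eqVlt => /orP[/eqP/val_inj -> //| ab] _ Da _.
exact: HD Da.
Qed.

Lemma is_interval_range n (D : {set 'I_n}) : is_interval D ->
  exists m p, (m <= p <= n)%N /\ forall z : 'I_n, (z \in D) = (m <= z < p)%N.
Proof.
move=> HD; have [->|[z0 Dz0]] := set_0Vmem D.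
  by exists 0%N, 0%N; split=> // z; rewrite in_set0 ltn0 andbF.
have [lo Dlo loP] := arg_minnP (@nat_of_ord n) Dz0.
have [hi Dhi hiP] := arg_maxnP (@nat_of_ord n) Dz0.
exists lo, hi.+1; split; first by have := loP _ Dhi; have := ltn_ord hi; lia.
move=> z; apply/idP/idP => [Dz | /andP[loz zhi]]; first by have := loP _ Dz; have := hiP _ Dz; lia.
exact: HD loz _ Dlo Dhi.
Qed.

Lemma down_closed_range n (D : {set 'I_n}) : down_closed D ->
  exists p, (p <= n)%N /\ forall z : 'I_n, (z \in D) = (z < p)%N.
Proof.
move=> HD; have [->|[z0 Dz0]] := set_0Vmem D.
  by exists 0%N; split=> // z; rewrite in_set0 ltn0.
have [hi Dhi hiP] := arg_maxnP (@nat_of_ord n) Dz0.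
exists hi.+1; split=> [|z]; first exact: ltn_ord.
apply/idP/idP => [/hiP|]; first by rewrite ltnS.
by rewrite ltnS leq_eqVlt => /orP[/eqP/val_inj -> // | zhi]; apply: HD zhi Dhi.
Qed.

Lemma up_closed_range n (D : {set 'I_n}) : up_closed D ->
  exists m, (m <= n)%N /\ forall z : 'I_n, (z \in D) = (m <= z)%N.
Proof.
move=> HD; have [->|[z0 Dz0]] := set_0Vmem D.
  by exists n; split=> // z; rewrite in_set0 leqNgt ltn_ord.
have [lo Dlo loP] := arg_minnP (@nat_of_ord n) Dz0.
exists lo; split=> [|z]; first exact: ltnW (ltn_ord lo).
apply/idP/idP => [/loP //|].
by rewrite leq_eqVlt => /orP[/eqP/val_inj <- // | loz]; apply: HD loz Dlo.
Qed.

Section Ramp.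
Variable R : realType.
Variables a b : R.

Definition ramp (x : R) : R := Num.min (Num.max (x - a) 0) (b - a).

Lemma ramp_below x : a <= b -> x <= b -> ramp x = Num.max (x - a) 0.
Proof. by move=> ab xb; rewrite /ramp min_l // ge_max; apply/andP; split; lra. Qed.

Lemma ramp_above x : a <= x -> ramp x = Num.min (x - a) (b - a).
Proof. by move=> ax; rewrite /ramp max_l //; lra. Qed.

Lemma ramp_left x : a <= b -> x <= a -> ramp x = 0.
Proof. by move=> ab xa; rewrite ramp_below ?max_r //; lra. Qed.

Lemma ramp_mid x : a <= x -> x <= b -> ramp x = x - a.
Proof. by move=> ax xb; rewrite ramp_above ?min_l //; lra. Qed.

Lemma ramp_right x : a <= b -> b <= x -> ramp x = b - a.
Proof. by move=> ab bx; rewrite ramp_above ?min_r //; lra. Qed.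

Lemma ramp_ge0 x : a <= b -> 0 <= ramp x.
Proof. by move=> ab; rewrite /ramp le_min le_max lexx orbT /=; lra. Qed.

Lemma ramp_nondecreasing : {homo ramp : x y / x <= y}.
Proof.
move=> x y xy; rewrite /ramp le_min !ge_min lexx orbT andbT ge_max !le_max.
by apply/orP; left; apply/andP; split; apply/orP; [left | right]; lra.
Qed.

Lemma ramp_convex_on_le : a <= b -> convex_on (fun x => x <= b) ramp.
Proof.
move=> ab x y t xb yb t0 t1; rewrite !ramp_below //; last by nra.
have maxP (u : R) : u - a <= Num.max (u - a) 0 /\ 0 <= Num.max (u - a) 0.
  by rewrite !le_max !lexx orbT.
have [xa x0] := maxP x; have [ya y0] := maxP y.
rewrite ge_max; apply/andP; split; nra.
Qed.

Lemma ramp_concave_on_ge : concave_on (fun x => a <= x) ramp.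
Proof.
move=> x y t ax ay t0 t1; rewrite !ramp_above //; last by nra.
have minP (u : R) : Num.min (u - a) (b - a) <= u - a /\ Num.min (u - a) (b - a) <= b - a.
  by rewrite !ge_min !lexx orbT.
have [xa xb] := minP x; have [ya yb] := minP y.
rewrite le_min; apply/andP; split; nra.
Qed.

End Ramp.

Lemma gain_ramp (R : realType) (m p z : nat) : (m <= p)%N ->
  gain (ramp m%:R p%:R) z = (m <= z < p)%N%:R :> R.
Proof.
move=> mp; rewrite /gain; have [zm|mz] := ltnP z m.
  by rewrite !ramp_left ?subrr //; rewrite ler_nat; lia.
have [zp|pz] /= := ltnP z p.
  rewrite !ramp_mid ?ler_nat; try lia.
  by rewrite -natr1; ring.
by rewrite !ramp_right ?subrr //; rewrite ler_nat; lia.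
Qed.

Section Constructions.
Variable R : realType.
Implicit Types (g : R -> R) (S : R -> Prop).

Lemma convex_on_sub S S' g : (forall x, S' x -> S x) -> convex_on S g -> convex_on S' g.
Proof. by move=> S'S gS x y t /S'S Sx /S'S Sy; apply: gS. Qed.

Lemma concave_on_sub S S' g : (forall x, S' x -> S x) -> concave_on S g -> concave_on S' g.
Proof. by move=> S'S gS x y t /S'S Sx /S'S Sy; apply: gS. Qed.

Lemma ramp_nondecr_on n (a b : R) : nondecr_on n (ramp a b).
Proof. by move=> x y _ xy _; apply: ramp_nondecreasing. Qed.

Lemma ramp_nonneg_on n (a b : R) : a <= b -> nonneg_on n (ramp a b).
Proof. by move=> ab x _; apply: ramp_ge0. Qed.

Lemma ramp_concave_fun n (b : R) : concave_fun n (ramp 0 b).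
Proof. by apply: concave_on_sub (@ramp_concave_on_ge R _ _) => x []. Qed.

Lemma ramp_convex_fun n (a : R) : a <= n%:R -> convex_fun n (ramp a n%:R).
Proof. by move=> an; apply: convex_on_sub (ramp_convex_on_le an) => x []. Qed.

Lemma ramp_sigmoid_fun n (a b : R) : a <= b -> sigmoid_fun n (ramp a b).
Proof.
move=> ab; exists a%:E; split.
  by apply: convex_on_sub (ramp_convex_on_le ab) => x [_]; rewrite lee_fin => /le_trans; apply.
by apply: concave_on_sub (@ramp_concave_on_ge R _ _) => x [_]; rewrite lee_fin.
Qed.

Lemma BR_set_ramp n (m p : nat) (D : {set 'I_n}) : (m <= p)%N ->
  (forall z : 'I_n, (z \in D) = (m <= z < p)%N) -> BR_set n (ramp m%:R p%:R : R -> R) 1 D.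
Proof.
by move=> mp DE z; rewrite best_responseE gain_ramp // DE; case: (_ && _); rewrite ?ler10.
Qed.

Definition step_sum n (D : {set 'I_n}) (x : R) : R :=
  \sum_(k in D) if k.+1%:R <= x then 1 else 0.

Lemma step_sum_nondecr_on n (D : {set 'I_n}) : nondecr_on n (step_sum D).
Proof.
move=> x y _ xy _; apply: ler_sum => k _.
by case: (lerP k.+1%:R x) => [/le_trans /(_ xy) -> //|]; case: ifP.
Qed.

Lemma step_sum_nonneg_on n (D : {set 'I_n}) : nonneg_on n (step_sum D).
Proof. by move=> x _; apply: sumr_ge0 => k _; case: ifP. Qed.

Lemma gain_step_sum n (D : {set 'I_n}) (z : 'I_n) : gain (step_sum D) z = (z \in D)%:R.
Proof.
rewrite /gain -sumrB (eq_bigr (fun k : 'I_n => (k == z)%:R)); last first.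
  by move=> k _; rewrite !ler_nat ltnS -val_eqE; case: ltngtP; rewrite ?subrr ?subr0.
have [Dz|nDz] := boolP (z \in D).
  by rewrite (bigD1 z) //= eqxx big1 ?addr0 // => k /andP[_ /negbTE ->].
by rewrite big1 // => k Dk; case: eqP Dk => // ->; rewrite (negbTE nDz).
Qed.

Lemma BR_set_step_sum n (D : {set 'I_n}) : BR_set n (step_sum D) 1 D.
Proof. by move=> z; rewrite best_responseE gain_step_sum; case: (z \in D); rewrite ?ler10. Qed.

End Constructions.

Theorem lemma2p3 (R : realType) (n : nat) (hn : (1 <= n)%N) :
  (* forward direction *)
  (forall (g : R -> R) (c : R), nondecr_on n g -> nonneg_on n g ->
     (exists! D : {set 'I_n}, BR_set n g c D) /\
     (forall D : {set 'I_n}, BR_set n g c D ->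
        (concave_fun n g -> is_interval D /\ down_closed D) /\
        (convex_fun n g -> is_interval D /\ up_closed D) /\
        (sigmoid_fun n g -> is_interval D))) /\
  (* converse direction *)
  (forall D : {set 'I_n},
     (exists (g : R -> R) (c : R),
        nondecr_on n g /\ nonneg_on n g /\ BR_set n g c D) /\
     (is_interval D /\ down_closed D ->
        exists (g : R -> R) (c : R),
          nondecr_on n g /\ nonneg_on n g /\ concave_fun n g /\ BR_set n g c D) /\
     (is_interval D /\ up_closed D ->
        exists (g : R -> R) (c : R),
          nondecr_on n g /\ nonneg_on n g /\ convex_fun n g /\ BR_set n g c D) /\
     (is_interval D ->
        exists (g : R -> R) (c : R),
          nondecr_on n g /\ nonneg_on n g /\ sigmoid_fun n g /\ BR_set n g c D)).
Proof.
split=> [g c _ _ | D].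
  split=> [|D HD].
    exists [set z : 'I_n | c <= gain g z]; split=> [|D]; first exact: BR_set_gain.
    exact/BR_set_unique/BR_set_gain.
  split; first by move=> /(BR_set_concave_down_closed HD) dc; split=> //; apply: down_closed_interval.
  split; first by move=> /(BR_set_convex_up_closed HD) uc; split=> //; apply: up_closed_interval.
  exact: BR_set_sigmoid_interval.
split.
  exists (step_sum D), 1; split; first exact: step_sum_nondecr_on.
  by split; [exact: step_sum_nonneg_on | exact: BR_set_step_sum].
split.
  move=> [_ /down_closed_range [p [_ DE]]]; exists (ramp 0%:R p%:R), 1.
  split; first exact: ramp_nondecr_on.
  split; first by apply: ramp_nonneg_on; rewrite ler_nat.
  by split; [exact: ramp_concave_fun | exact: BR_set_ramp].
split.
  move=> [_ /up_closed_range [m [mn DE]]]; exists (ramp m%:R n%:R), 1.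
  split; first exact: ramp_nondecr_on.
  split; first by apply: ramp_nonneg_on; rewrite ler_nat.
  split; first by apply: ramp_convex_fun; rewrite ler_nat.
  by apply: BR_set_ramp => // z; rewrite DE ltn_ord andbT.
move=> /is_interval_range [m [p [/andP[mp _] DE]]]; exists (ramp m%:R p%:R), 1.
split; first exact: ramp_nondecr_on.
split; first by apply: ramp_nonneg_on; rewrite ler_nat.
by split; [apply: ramp_sigmoid_fun; rewrite ler_nat | exact: BR_set_ramp].
Qed.
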